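(* Let $(P,\omega)$ be a sign-graded labeled poset of rank $r$ with $p=|P|$ and $\omega$ canonical, and let $\pi\in\mathcal{L}(P,\omega)$. Let $\hat\pi$ be the element of $\operatorname{Orb}(\pi)$ such that $0\hat\pi0$ has no double descents. Then $$\sum_{\sigma\in\operatorname{Orb}(\pi)}t^{\operatorname{des}(\sigma)}=t^{\operatorname{des}(\hat\pi)}(1+t)^{p-r-1-2\operatorname{des}(\hat\pi)}.$$ Moreover, if $r=0$ then $\operatorname{peak}$ is constant on each orbit of the $\mathbb{Z}_2^P$-action and $\operatorname{peak}(\pi)=\operatorname{des}(\hat\pi)$ for all $\pi\in\mathcal{L}(P,\omega)$.
   Context: A labeled poset is a finite poset $P$ with an injection $\omega:P\to\mathbb{Z}$. Its Jordan–Hölder set $\mathcal{L}(P,\omega)$ is the set of words $\pi=a_1\cdots a_p$ that are permutations of $\omega(P)$ such that $x<_Py$ implies $\omega(x)$ precedes $\omega(y)$. For a cover relation $x\lessdot y$ in $P$ let $\epsilon(x,y)=1$ if $\omega(x)<\omega(y)$ and $-1$ otherwise. $(P,\omega)$ is sign-graded if for every maximal chain $x_1<x_2<\cdots<x_k$ the sum $\sum_{i=2}^k\epsilon(x_{i-1},x_i)$ is the same; this common value $r$ is the rank, and $\rho(x)$ is this sum along any saturated chain from a minimal element to $x$. The labeling $\omega$ is canonical if $(P,\omega)$ is sign-graded, $\rho$ takes values in $\{0,1\}$, elements of rank $0$ have negative labels and elements of rank $1$ have positive labels. For $\pi=a_1\cdots a_p$, $\operatorname{des}(\pi)=|\{i\in[p-1]:a_i>a_{i+1}\}|$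 and $\operatorname{peak}(\pi)=|\{2\le i\le p-1:a_{i-1}<a_i>a_{i+1}\}|$. Set $a_0=a_{p+1}=0$; double ascents/descents, peaks and valleys of letters $a_k$ ($k\in[p]$) are taken in $0\pi0$ ($a_{k-1}<a_k<a_{k+1}$, $a_{k-1}>a_k>a_{k+1}$, $a_{k-1}<a_k>a_{k+1}$, $a_{k-1}>a_k<a_{k+1}$ respectively). For $x\in\omega(P)$ define $\psi_x(\pi)$: if $x<0$ is a double descent, move $x$ to between the first pair of consecutive letters $a_i,a_{i+1}$ to the right of $x$ with $a_i<x<a_{i+1}$; if $x<0$ is a double ascent, move $x$ to between the first pair to the left with $a_i>x>a_{i+1}$; if $x>0$ is a double descent, move $x$ to between the first pair to the left with $a_i<x<a_{i+1}$; if $x>0$ is a double ascent, move $x$ to between the first pair to the right with $a_i>x>a_{i+1}$; if $x$ is a peak or valley, $\psi_x(\pi)=\pi$. These maps send $\mathcal{L}(P,\omega)$ to itself and define a $\mathbb{Z}_2^P$-action $\psi_S(\pi)=\prod_{x\in S}\psi_{\omega(x)}(\pi)$, $S\subseteq P$; $\operatorname{Orb}(\pi)$ is the orbit of $\pi$, and it contains a unique element $\hat\pi$ with $0\hat\pi0$ having no double descents. *)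

From mathcomp Require Import all_boot all_order all_algebra.
Set Implicit Arguments. Unset Strict Implicit. Unset Printing Implicit Defensive.
Import Order.TTheory GRing.Theory Num.Theory.
Local Open Scope ring_scope.

Definition partial_order (T : finType) (le : rel T) : Prop :=
  [/\ reflexive le, antisymmetric le & transitive le].

Section LabeledPoset.
Variables (T : finType) (le : rel T) (omega : T -> int).

Definition plt (x y : T) : bool := (x != y) && le x y.

Definition covers (x y : T) : bool :=
  plt x y && [forall z, ~~ (plt x z && plt z y)].

Definition minimal (x : T) : bool := [forall z, le z x ==> (z == x)].

Definition eps (x y : T) : int := if omega x < omega y then 1 else -1.

Definition chain_sum (s : seq T) : int :=
  match s with
  | [::] => 0
  | x :: s' => \sum_(e <- pairmap eps x s') e
  end.

Definition maximal_chain (s : seq T) : bool :=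
  sorted plt s && [forall z, (z \in s) || has (fun y => ~~ (le y z || le z y)) s].

Definition sign_graded_rank (r : int) : Prop :=
  forall s, maximal_chain s -> chain_sum s = r.

Definition sign_graded : Prop := exists r, sign_graded_rank r.

Definition sat_chain_to (s : seq T) (x : T) : bool :=
  match s with
  | [::] => false
  | y :: s' => [&& minimal y, path covers y s' & last y s' == x]
  end.

(* canonical labeling: sign-graded, rho in {0,1}, rank-0 elements negative
   labels, rank-1 elements positive labels (rho(x) = chain_sum of any
   saturated chain from a minimal element to x) *)
Definition canonical : Prop :=
  sign_graded /\
  forall x s, sat_chain_to s x ->
    (chain_sum s = 0 /\ omega x < 0) \/ (chain_sum s = 1 /\ 0 < omega x).

Definition in_JH (w : seq int) : bool :=
  perm_eq w (map omega (enum T)) &&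
  [forall x, forall y, plt x y ==> (index (omega x) w < index (omega y) w)%N].

End LabeledPoset.

Definition des (w : seq int) : nat :=
  count (fun i => nth 0 w i > nth 0 w i.+1) (iota 0 (size w).-1).

(* peaks at positions 2 <= i <= p-1 (1-based), i.e. interior peaks *)
Definition peak (w : seq int) : nat :=
  count (fun i => (nth 0 w i.-1 < nth 0 w i) && (nth 0 w i > nth 0 w i.+1))
        (iota 1 (size w).-2).

Definition no_double_descent (w : seq int) : bool :=
  let z := 0 :: rcons w 0 in
  all (fun k => ~~ ((nth 0 z k.-1 > nth 0 z k) && (nth 0 z k > nth 0 z k.+1)))
      (iota 1 (size w)).

(* ins_r c x a s: scanning the word a :: s (followed by the boundary letter 0),
   insert x right after the first letter a_i such that c a_i a_{i+1}. *)
Fixpoint ins_r (c : int -> int -> bool) (x a : int) (s : seq int) : seq int :=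
  if c a (head 0 s) then a :: x :: s
  else match s with
       | [::] => [:: a; x]
       | b :: s' => a :: ins_r c x b s'
       end.

Definition move_right (c : int -> int -> bool) (x : int) (pre post : seq int) :=
  pre ++ match post with
         | [::] => [:: x]
         | a :: s => ins_r c x a s
         end.

Definition move_left (c : int -> int -> bool) (x : int) (pre post : seq int) :=
  match rev pre with
  | [::] => x :: post
  | a :: s => rev (ins_r (fun u v => c v u) x a s) ++ post
  end.

Definition psi (x : int) (w : seq int) : seq int :=
  let k := index x w in
  let pre := take k w in
  let post := drop k.+1 w in
  let l := last 0 pre in
  let r := head 0 post in
  if x \notin w then w else
  if (l > x) && (x > r) then
    (if x < 0 then move_right (fun a b => (a < x) && (x < b)) x pre post
     else move_left (fun a b => (a < x) && (x < b)) x pre post)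
  else if (l < x) && (x < r) then
    (if x < 0 then move_left (fun a b => (a > x) && (x > b)) x pre post
     else move_right (fun a b => (a > x) && (x > b)) x pre post)
  else w.

Definition psiS (T : finType) (omega : T -> int) (A : {set T}) (w : seq int) :=
  foldr (fun x v => psi (omega x) v) w (enum A).

Definition orbit_of (T : finType) (omega : T -> int) (w : seq int) : seq (seq int) :=
  undup [seq psiS omega A w | A <- enum [set: {set T}]].

(* Record for each letter y of a word w whether its two neighbours in 0w0 are
   larger than y.  The map psi_y swaps these two bits for y, changes them for no
   other letter, keeps the signs of the first and last letters, and is the
   identity on peaks and valleys.  Hence A |-> psi_A pi is injective on subsets A
   of the set F of double ascents and descents of pi, its image is the orbit, and
   the element without double descents is psi_D pi, D the double descents of pi.
   Counting the descents of w0 by their top letters and those of 0w by their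
   bottom letters gives
     des w + [last w > 0] = #peaks + #double descents,
     des w + [first w < 0] = #valleys + #double descents.
   Peaks and valleys are orbit invariants, so des (psi_A pi) = des pihat + |D (+) A|
   and the sum over A in F is t^(des pihat) (1 + t)^|F|; moreover p = #peaks +
   #valleys + |F| gives |F| = p - 2 des pihat - [first < 0] - [last > 0].
   For a canonical labelling the first letter of pi labels a minimal element, so
   it is negative, and the last one labels a maximal element, so it is positive
   iff r = 1.  When r = 0 both ends are negative, so peak counts the peaks of
   0w0, an orbit invariant equal to des pihat. *)

From mathcomp Require Import all_boot all_order all_algebra.
From mathcomp Require Import zify.
Set Implicit Arguments. Unset Strict Implicit. Unset Printing Implicit Defensive.
Import Order.TTheory GRing.Theory Num.Theory.
Local Open Scope ring_scope.

(** * Counting and summing over subsets *)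

Lemma count_split (T : Type) (a b c : pred T) (s : seq T) :
  (forall x, a x = (b x + c x)%N :> nat) -> count a s = (count b s + count c s)%N.
Proof. by move=> abc; elim: s => //= x s ->; rewrite abc addnACA. Qed.

Lemma size_pair_split (T : Type) (f : T -> bool * bool) (s : seq T) :
  size s = (count (fun x => f x == (false, false)) s + count (fun x => f x == (true, true)) s
            + count (fun x => (f x).1 != (f x).2) s)%N.
Proof. by elim: s => //= x s ->; case: (f x) => [[] []]; rewrite /= ?addnS ?addSn. Qed.

Lemma count_enum (T : finType) (P : pred T) : count P (enum T) = #|[set t | P t]|.
Proof.
rewrite cardE -size_filter /enum_mem -filter_predI; congr size.
by apply: eq_filter => t; rewrite /= inE andbT.
Qed.

Lemma sum_powerset_exp (R : comPzSemiRingType) (T : finType) (M : {set T}) (x : R) :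
  \sum_(A in powerset M) x ^+ #|A| = (1 + x) ^+ #|M|.
Proof.
rewrite -prodr_const [RHS]big_mkcond /=.
have -> : \prod_t (if t \in M then 1 + x else 1) = \prod_t ((if t \in M then x else 0) + 1).
  by apply: eq_bigr => t _; case: (t \in M); rewrite ?add0r // addrC.
rewrite bigA_distr big_mkcond /=; apply: eq_bigr => A _.
rewrite powersetE; case: ifP => [AM | /negbT/subsetPn[t tA tM]].
  rewrite -big_mkcond /= -prodr_const; apply: eq_big => // t /= tA.
  by rewrite (subsetP AM t tA).
by rewrite (bigD1 t) //= tA (negbTE tM) mul0r.
Qed.

Definition symdiff (T : finType) (A B : {set T}) : {set T} := [set t | (t \in A) (+) (t \in B)].

Lemma symdiffxx (T : finType) (A : {set T}) : symdiff A A = set0.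
Proof. by apply/setP => t; rewrite !inE addbb. Qed.

Lemma symdiffK (T : finType) (D : {set T}) : involutive (symdiff D).
Proof. by move=> A; apply/setP => t; rewrite !inE addKb. Qed.

Lemma sum_powerset_symdiff (R : comPzSemiRingType) (T : finType) (D M : {set T}) (x : R) :
  D \subset M -> \sum_(A in powerset M) x ^+ #|symdiff D A| = (1 + x) ^+ #|M|.
Proof.
move=> DM; rewrite -sum_powerset_exp (reindex_inj (inv_inj (symdiffK D))) /=.
apply: eq_big => [A | A _]; last by rewrite symdiffK.
rewrite !powersetE; apply/subsetP/subsetP => sub t tA;
  case tD: (t \in D); do ?exact: subsetP DM t tD.
  by apply: sub; rewrite inE tD tA.
by apply: sub; rewrite inE tD in tA.
Qed.

(** * Neighbourhoods of letters in 0w0 *)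

Definition lnb (w : seq int) (y : int) : int := last 0 (take (index y w) w).
Definition rnb (w : seq int) (y : int) : int := head 0 (drop (index y w).+1 w).

Definition swap (A : Type) (p : A * A) : A * A := (p.2, p.1).

(* [(true, false)] is a double descent, [(false, true)] a double ascent,
   [(false, false)] a peak and [(true, true)] a valley. *)
Definition nbhd (w : seq int) (y : int) : bool * bool := (y < lnb w y, y < rnb w y).

Definition mobile (w : seq int) (y : int) : bool := (nbhd w y).1 != (nbhd w y).2.

Definition between (a x b : int) : bool :=
  ((a < x) && (x < b)) || ((b < x) && (x < a)).

Lemma index_cat_notin (A B : seq int) y : y \notin A -> index y (A ++ y :: B) = size A.
Proof. by move=> yA; rewrite index_cat (negbTE yA) /= eqxx addn0. Qed.

Lemma take_index_cat (A B : seq int) y : y \notin A ->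
  take (index y (A ++ y :: B)) (A ++ y :: B) = A.
Proof. by move=> yA; rewrite index_cat_notin // take_size_cat. Qed.

Lemma drop_index_cat (A B : seq int) y : y \notin A ->
  drop (index y (A ++ y :: B)).+1 (A ++ y :: B) = B.
Proof. by move=> yA; rewrite index_cat_notin // -cat_rcons drop_size_cat ?size_rcons. Qed.

Lemma lnb_cat (A B : seq int) y : y \notin A -> lnb (A ++ y :: B) y = last 0 A.
Proof. by move=> yA; rewrite /lnb take_index_cat. Qed.

Lemma rnb_cat (A B : seq int) y : y \notin A -> rnb (A ++ y :: B) y = head 0 B.
Proof. by move=> yA; rewrite /rnb drop_index_cat. Qed.

Lemma nbhd_cat (A B : seq int) y : y \notin A ->
  nbhd (A ++ y :: B) y = (y < last 0 A, y < head 0 B).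
Proof. by move=> yA; rewrite /nbhd lnb_cat // rnb_cat. Qed.

Lemma notin_cat_uniq (A B : seq int) y : uniq (A ++ y :: B) -> y \notin A.
Proof.
rewrite cat_uniq => /and3P[_ + _]; apply: contra => yA.
by apply/hasP; exists y; rewrite ?mem_head.
Qed.

Lemma last_neq (s : seq int) x : x \notin s -> x != 0 -> last 0 s != x.
Proof.
by case: s => [|a s] /= xs x0; [rewrite eq_sym | apply: contraNneq xs => <-; rewrite mem_last].
Qed.

Lemma head_neq (s : seq int) x : x \notin s -> x != 0 -> head 0 s != x.
Proof.
by case: s => [|a s] /= xs x0; [rewrite eq_sym | apply: contraNneq xs => ->; rewrite mem_head].
Qed.

Lemma between_neq l x r : l != x -> r != x -> between l x r = ((x < l) != (x < r)).
Proof. by rewrite /between => lx rx; apply/idP/idP; lia. Qed.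

Lemma betweenC a x b : between a x b = between b x a.
Proof. by rewrite /between orbC. Qed.

Lemma between_lt a x b : between a x b -> (a < x) = (a < b).
Proof. by case/orP=> /andP[]; lia. Qed.

Lemma between_gt a x b : between a x b -> (x < a) = (b < a).
Proof. by case/orP=> /andP[]; lia. Qed.

(* The boundary contributions to des (0 :: w) and des (rcons w 0). *)
Definition end_signs (w : seq int) : bool * bool := (head 0 w < 0, 0 < last 0 w).

Lemma remove_between P Q x : uniq (P ++ x :: Q) -> between (last 0 P) x (head 0 Q) ->
  end_signs (P ++ x :: Q) = end_signs (P ++ Q) /\
  {in P ++ Q, forall y, nbhd (P ++ x :: Q) y = nbhd (P ++ Q) y}.
Proof.
move=> uPQ btw; split.
  rewrite /end_signs !last_cat /=; congr pair.
    by case: P btw {uPQ} => //= /between_gt.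
  by case: Q btw {uPQ} => [|b Q] //=; rewrite betweenC => /between_lt.
move=> y yPQ; move: yPQ uPQ btw; rewrite mem_cat => /orP[] /splitPr[A B] uPQ btw.
  have yA : y \notin A by apply: (@notin_cat_uniq _ (B ++ x :: Q)); rewrite -cat_cons catA.
  rewrite -!catA !cat_cons !nbhd_cat //; case: B btw {uPQ} => //=.
  by rewrite last_cat /= => /between_lt ->.
rewrite -!cat_cons !catA.
have yPA : y \notin P ++ x :: A by apply: (@notin_cat_uniq _ B); rewrite -catA.
have yPA' : y \notin P ++ A by apply: contra yPA; rewrite !mem_cat inE => /orP[] ->; rewrite ?orbT.
rewrite !nbhd_cat //; case: A btw {yPA yPA' uPQ} => [|a A] /=; last by rewrite !last_cat.
by rewrite betweenC !last_cat /= => /between_lt ->.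
Qed.

Lemma reinsert_between pre post P Q x :
  uniq (pre ++ x :: post) -> P ++ Q = pre ++ post ->
  between (last 0 pre) x (head 0 post) -> between (last 0 P) x (head 0 Q) ->
  [/\ perm_eq (P ++ x :: Q) (pre ++ x :: post),
      end_signs (P ++ x :: Q) = end_signs (pre ++ x :: post) &
      {in pre ++ post, forall y, nbhd (P ++ x :: Q) y = nbhd (pre ++ x :: post) y}].
Proof.
move=> u ePQ btw btwPQ.
have pe : perm_eq (P ++ x :: Q) (pre ++ x :: post).
  by apply/permP => a; rewrite !count_cat /= addnCA [RHS]addnCA -!count_cat ePQ.
have [ends nb] := remove_between u btw.
have [endsPQ nbPQ] := remove_between (etrans (perm_uniq pe) u) btwPQ.
rewrite ePQ in endsPQ nbPQ; split => // [|y y_in]; first by rewrite endsPQ.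
by rewrite nbPQ ?nb // ePQ.
Qed.

(** * The maps psi *)

(* [R] is [<] or its converse, so that one analysis of [ins_r] serves the four
   ways in which [psi] moves a letter. *)
Section Insertion.
Variables (R : rel int) (x : int).
Hypothesis R_total : forall b, b != x -> R x b || R b x.
Hypothesis R_x0 : R x 0.

Lemma ins_rP c a s : (forall u v, c u v = R u x && R x v) -> R a x -> x \notin s ->
  exists u v, [/\ a :: s = u ++ v, u != [::], ins_r c x a s = u ++ x :: v,
                  R (last 0 u) x & R x (head 0 v)].
Proof.
move=> cE; elim: s a => [|b s IHs] a Rax /=.
  by rewrite cE Rax R_x0 => _; exists [:: a], [::].
rewrite inE negb_or eq_sym cE Rax /= => /andP[bx xs].
case: ifP => [Rxb | Nxb]; first by exists [:: a], (b :: s).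
have Rbx : R b x by move: (R_total bx); rewrite Nxb.
have [u [v [-> u0 -> Rux Rxv]]] := IHs b Rbx xs.
by exists (a :: u), v; split => //; case: u u0 Rux.
Qed.

Lemma move_right_spec c pre a s :
  (forall u v, c u v = R u x && R x v) -> R a x -> x \notin s ->
  exists P Q, [/\ move_right c x pre (a :: s) = P ++ x :: Q,
                  P ++ Q = pre ++ a :: s, R (last 0 P) x & R x (head 0 Q)].
Proof.
move=> cE Rax xs; have [u [v [e u0 ins Rux Rxv]]] := ins_rP cE Rax xs.
exists (pre ++ u), v; rewrite /move_right ins e -!catA last_cat; split => //.
by case: u u0 Rux {e ins}.
Qed.

Lemma move_left_spec c pre post :
  (forall u v, c v u = R u x && R x v) -> pre != [::] -> R (last 0 pre) x ->
  x \notin pre ->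
  exists P Q, [/\ move_left c x pre post = P ++ x :: Q,
                  P ++ Q = pre ++ post, R x (last 0 P) & R (head 0 Q) x].
Proof.
move=> cE; rewrite /move_left; case/lastP: pre => [|s a] // _.
rewrite rev_rcons last_rcons mem_rcons inE negb_or -mem_rev => Rax /andP[_ xs].
have [u [v [e u0 -> Rux Rxv]]] := ins_rP (c := fun u v => c v u) cE Rax xs.
exists (rev v), (rev u ++ post); split.
- by rewrite rev_cat rev_cons cat_rcons -catA.
- by rewrite catA -rev_cat -e rev_cons revK.
- by case: v {e} Rxv => //= b v; rewrite rev_cons last_rcons.
- by case/lastP: u u0 Rux {e} => // u b _; rewrite last_rcons rev_rcons.
Qed.

End Insertion.

Lemma psi_fixed x w : ~~ mobile w x -> psi x w = w.
Proof.
rewrite /mobile /= negbK => /eqP e.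
rewrite /psi /= -/(lnb w x) -/(rnb w x).
have [-> ->] : ((x < lnb w x) && (rnb w x < x) = false) /\
               ((lnb w x < x) && (x < rnb w x) = false) by split; lia.
by case: ifP.
Qed.

Lemma psi_ddes pre x post : x \notin pre -> x \notin post -> x != 0 ->
  x < last 0 pre -> head 0 post < x ->
  exists P Q, [/\ psi x (pre ++ x :: post) = P ++ x :: Q, P ++ Q = pre ++ post,
                  last 0 P < x & x < head 0 Q].
Proof.
move=> xpre xpost x0 xl rx.
rewrite /psi /= take_index_cat // drop_index_cat // mem_cat mem_head orbT /= xl rx /=.
case: ifP => xneg.
  case: post xpost rx => [|a s] /=; first lia.
  rewrite inE negb_or => /andP[_ xs] ax.
  apply: (move_right_spec (R := fun u v => u < v)) => //.
  by move=> b; rewrite eq_sym => /lt_total.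
have pre0 : pre != [::] by apply: contraTneq xl => ->/=; lia.
have xpos : 0 < x by lia.
apply: (move_left_spec (R := fun u v => v < u)) => //.
- by move=> b /lt_total.
- by move=> u v; rewrite andbC.
Qed.

Lemma psi_dasc pre x post : x \notin pre -> x \notin post -> x != 0 ->
  last 0 pre < x -> x < head 0 post ->
  exists P Q, [/\ psi x (pre ++ x :: post) = P ++ x :: Q, P ++ Q = pre ++ post,
                  x < last 0 P & head 0 Q < x].
Proof.
move=> xpre xpost x0 lx xr.
rewrite /psi /= take_index_cat // drop_index_cat // mem_cat mem_head orbT /=.
rewrite (lt_gtF lx) lx xr /=; case: ifP => xneg.
  have pre0 : pre != [::] by apply: contraTneq lx => ->/=; lia.
  apply: (move_left_spec (R := fun u v => u < v)) => //.
  - by move=> b; rewrite eq_sym => /lt_total.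
  - by move=> u v; rewrite andbC.
have xpos : 0 < x by lia.
case: post xpost xr => [|a s] /=; first lia.
rewrite inE negb_or => /andP[_ xs] xa.
by apply: (move_right_spec (R := fun u v => v < u)) => // b /lt_total.
Qed.

Lemma psi_between pre x post : x \notin pre -> x \notin post -> x != 0 ->
  between (last 0 pre) x (head 0 post) ->
  exists P Q, [/\ psi x (pre ++ x :: post) = P ++ x :: Q, P ++ Q = pre ++ post,
    between (last 0 P) x (head 0 Q) &
    (x < last 0 P, x < head 0 Q) = swap (x < last 0 pre, x < head 0 post)].
Proof.
move=> xpre xpost x0 /orP[/andP[lx xr] | /andP[rx xl]].
  have [P [Q [-> catPQ xP Qx]]] := psi_dasc xpre xpost x0 lx xr.
  exists P, Q; split=> //; first by rewrite /between Qx xP orbT.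
  by rewrite xP (lt_gtF Qx) xr (lt_gtF lx).
have [P [Q [-> catPQ lP xQ]]] := psi_ddes xpre xpost x0 xl rx.
exists P, Q; split=> //; first by rewrite /between lP xQ.
by rewrite (lt_gtF lP) xQ (lt_gtF rx) xl.
Qed.

Lemma psi_step (x : int) (w : seq int) : uniq w -> 0 \notin w ->
  [/\ perm_eq (psi x w) w, end_signs (psi x w) = end_signs w &
      {in w, forall y, nbhd (psi x w) y = if y == x then swap (nbhd w y) else nbhd w y}].
Proof.
move=> uw w0; have [xw | xw] := boolP (x \in w); last first.
  by rewrite /psi xw; split=> // y yw; case: eqP => // yx; rewrite -yx yw in xw.
have [mob | immob] := boolP (mobile w x); last first.
  rewrite psi_fixed //; split=> // y _; case: eqP => // ->.
  by move: immob; rewrite /mobile negbK; case: (nbhd w x) => a b /= /eqP ->.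
case/splitPr: xw uw w0 mob => pre post uw w0.
have xpre := notin_cat_uniq uw.
have xpost : x \notin post by move: uw; rewrite cat_uniq => /and3P[_ _ /andP[]].
have x0 : x != 0 by apply: contraNneq w0 => <-; rewrite mem_cat mem_head orbT.
rewrite /mobile nbhd_cat //= -between_neq ?last_neq ?head_neq // => btw.
have [P [Q [-> ePQ btwPQ nbx]]] := psi_between xpre xpost x0 btw.
have [pe ends nb] := reinsert_between uw ePQ btw btwPQ.
split=> // y; rewrite mem_cat inE; case: eqP => [-> _ | _ /= y_in].
  by rewrite !nbhd_cat ?(notin_cat_uniq (etrans (perm_uniq pe) uw)).
by apply: nb; rewrite mem_cat.
Qed.

Lemma foldr_psi (w l : seq int) : uniq w -> 0 \notin w -> uniq l ->
  [/\ perm_eq (foldr psi w l) w, end_signs (foldr psi w l) = end_signs w &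
      {in w, forall y, nbhd (foldr psi w l) y =
                       if y \in l then swap (nbhd w y) else nbhd w y}].
Proof.
move=> uw w0; elim: l => [|x l IHl] /=; first by move=> _; split=> // y.
case/andP=> xl /IHl[pe ends nb].
have v0 : 0 \notin foldr psi w l by rewrite (perm_mem pe).
have [pe' ends' nb'] := psi_step x (etrans (perm_uniq pe) uw) v0.
split=> [|| y yw]; first exact: perm_trans pe' pe; first by rewrite ends'.
rewrite nb' ?(perm_mem pe) // nb // inE; case: eqP => // ->.
by rewrite (negbTE xl).
Qed.

Lemma mobile_swap w v y :
  nbhd v y = swap (nbhd w y) \/ nbhd v y = nbhd w y -> mobile v y = mobile w y.
Proof. by rewrite /mobile; case: (nbhd w y) => a b [] ->; rewrite //= eq_sym. Qed.

Lemma foldr_psi_mobile (w l : seq int) : uniq w -> 0 \notin w -> uniq l ->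
  foldr psi w l = foldr psi w (filter (mobile w) l).
Proof.
move=> uw w0; elim: l => [|x l IHl] //= /andP[xl ul].
have [pe _ nb] := foldr_psi uw w0 ul.
case: ifP => /= [_ | immob]; rewrite -IHl //.
have [xw | xw] := boolP (x \in w); last by rewrite /psi (perm_mem pe) xw.
rewrite psi_fixed // (@mobile_swap w) ?immob // nb // (negbTE xl).
by right.
Qed.

(** * Descents and peaks from neighbourhoods *)

Lemma des_cons a b s : des [:: a, b & s] = ((b < a)%R + des (b :: s))%N.
Proof. by rewrite /des /= (iotaDl 1 0) count_map. Qed.

Lemma peak_cons a b c s :
  peak [:: a, b, c & s] = (((a < b) && (c < b))%R + peak [:: b, c & s])%N.
Proof.
rewrite /peak /= (iotaDl 1 1) count_map; congr (_ + _)%N.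
by apply: eq_in_count => i; rewrite mem_iota; case: i.
Qed.

Lemma des_cons0 w : des (0 :: w) = ((head 0 w < 0)%R + des w)%N.
Proof. by case: w => // a w; rewrite des_cons. Qed.

Lemma des_rcons0 w : des (rcons w 0) = (des w + (0 < last 0 w)%R)%N.
Proof.
elim: w => // a [|b w] IHw; first by rewrite /= des_cons addnC.
by rewrite !rcons_cons des_cons -rcons_cons IHw des_cons addnA.
Qed.

Lemma count_left_above pre w : uniq (pre ++ w) ->
  count (fun y => (nbhd (pre ++ w) y).1) w = des (last 0 pre :: w).
Proof.
elim: w pre => [|a t IHt] pre //= u.
rewrite lnb_cat ?(notin_cat_uniq u) // -cat_rcons IHt ?cat_rcons //.
by rewrite last_rcons des_cons.
Qed.

Lemma negb_lt_neq (a b : int) : a != b -> ~~ (a < b) = (b < a).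
Proof. by move=> ab; rewrite -leNgt le_eqVlt eq_sym (negbTE ab). Qed.

Lemma count_right_below pre w : uniq (pre ++ w) -> 0 \notin w ->
  count (fun y => ~~ (nbhd (pre ++ w) y).2) w = des (rcons w 0).
Proof.
elim: w pre => [|a t IHt] pre //= u.
rewrite inE negb_or eq_sym => /andP[a0 t0].
rewrite rnb_cat ?(notin_cat_uniq u) // -cat_rcons IHt ?cat_rcons //.
have at_ : a \notin t by move: u; rewrite cat_uniq => /and3P[_ _ /andP[]].
rewrite negb_lt_neq 1?eq_sym ?head_neq //.
by case: t {IHt u t0 at_} => [|b t]; rewrite /= des_cons.
Qed.

Lemma count_peak_letters pre w : uniq (pre ++ w) -> 0 \notin w ->
  ~~ (0 < last (last 0 pre) w) ->
  count (fun y => nbhd (pre ++ w) y == (false, false)) w = peak (last 0 pre :: w).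
Proof.
elim: w pre => [|b t IHt] pre //= u; rewrite inE negb_or eq_sym => /andP[b0 t0] tneg.
have bpre := notin_cat_uniq u.
have bt : b \notin t by move: u; rewrite cat_uniq => /and3P[_ _ /andP[]].
rewrite nbhd_cat // -cat_rcons IHt ?cat_rcons ?last_rcons // xpair_eqE !eqbF_neg.
have bl : b != last 0 pre by rewrite eq_sym last_neq.
rewrite negb_lt_neq //; case: t {IHt u t0} bt tneg => [|c t] /= bt tneg.
  by rewrite andbC negb_lt_neq // (negbTE tneg).
have bc : b != c by apply: contraNneq bt => ->; exact: mem_head.
by rewrite peak_cons negb_lt_neq.
Qed.

Lemma peak_cons0 w : head 0 w < 0 -> peak (0 :: w) = peak w.
Proof. by case: w => [|a [|b s]] //= a0; rewrite peak_cons (lt_gtF a0). Qed.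

Lemma count_peaks w : uniq w -> 0 \notin w -> head 0 w < 0 -> ~~ (0 < last 0 w) ->
  count (fun y => nbhd w y == (false, false)) w = peak w.
Proof.
by move=> uw w0 hw lw; rewrite -peak_cons0 //; apply: (count_peak_letters (pre := [::])).
Qed.

Lemma rnb_neq w y : uniq w -> 0 \notin w -> y \in w -> rnb w y != y.
Proof.
move=> uw w0 yw; case/splitPr: yw uw w0 => A B uw w0.
have y0 : y != 0 by apply: contraNneq w0 => <-; rewrite mem_cat mem_head orbT.
rewrite rnb_cat ?(notin_cat_uniq uw) // head_neq //.
by move: uw; rewrite cat_uniq => /and3P[_ _ /andP[]].
Qed.

Lemma lnb_nth w i : uniq w -> (i < size w)%N -> lnb w (nth 0 w i) = nth 0 (0 :: w) i.
Proof.
move=> uw iw; rewrite /lnb index_uniq //; case: i iw => [|i] iw; first by rewrite take0.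
by rewrite -nth_last size_take iw nth_take.
Qed.

Lemma rnb_nth w i : uniq w -> (i < size w)%N -> rnb w (nth 0 w i) = nth 0 w i.+1.
Proof. by move=> uw iw; rewrite /rnb index_uniq // -nth0 nth_drop addn0. Qed.

Lemma nth_rcons0 (w : seq int) k : nth 0 (rcons w 0) k = nth 0 w k.
Proof. by rewrite nth_rcons; case: ltngtP => // [/ltnW k_ge | ->]; rewrite nth_default. Qed.

Lemma no_double_descentE w : uniq w -> 0 \notin w ->
  no_double_descent w = all (fun y => nbhd w y != (true, false)) w.
Proof.
move=> uw w0; rewrite /no_double_descent (iotaDl 1 0) all_map.
rewrite -[X in _ = all _ X](mkseq_nth 0 w) all_map.
apply: eq_in_all => i; rewrite mem_iota add0n => /andP[_ iw].
rewrite /preim /= add0n add1n -rcons_cons !nth_rcons0 /nbhd lnb_nth // rnb_nth //.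
by rewrite xpair_eqE eqb_id eqbF_neg negb_lt_neq // eq_sym -rnb_nth // rnb_neq // mem_nth.
Qed.

(** * Saturated chains and linear extensions *)

Section Poset.
Variables (T : finType) (le : rel T).
Hypothesis le_order : partial_order le.

Lemma plt_trans : transitive (plt le).
Proof.
case: le_order => _ anti tr y x z /andP[xy lxy] /andP[yz lyz].
rewrite /plt (tr _ _ _ lxy lyz) andbT; apply: contraNneq xy => exz.
by apply/eqP/anti; rewrite lxy exz lyz.
Qed.

Definition strict_below (x : T) : {set T} := [set z | plt le z x].

Lemma exists_cover x z : plt le z x ->
  exists y, covers le y x /\ (#|strict_below y| < #|strict_below x|)%N.
Proof.
move=> zx; have zb : z \in strict_below x by rewrite inE.
have [y yb ymax] : exists2 y, y \in strict_below x &
    forall t, t \in strict_below x -> (#|strict_below t| <= #|strict_below y|)%N.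
  by case: (arg_maxnP (fun y => #|strict_below y|) zb) => y; exists y.
have grow t : plt le y t -> (#|strict_below y| < #|strict_below t|)%N.
  move=> yt; apply: proper_card; apply/properP; split.
    by apply/subsetP => u; rewrite !inE => uy; apply: plt_trans uy yt.
  by exists y; rewrite !inE ?yt // /plt eqxx.
have yx : plt le y x by rewrite inE in yb.
exists y; split; last exact: grow.
rewrite /covers yx; apply/forallP => t; apply/negP => /andP[yt tx].
by have := ymax t; rewrite inE tx leqNgt grow // => /(_ isT).
Qed.

Lemma exists_sat_chain x : exists s, sat_chain_to le s x.
Proof.
elim: {x}_.+1 {-2}x (ltnSn #|strict_below x|) => // n IHn x xn.
case mx: (minimal le x); first by exists [:: x]; rewrite /= mx eqxx.
have [z zx] : exists z, plt le z x.
  move/negbT: mx; rewrite negb_forall => /existsP[z]; rewrite negb_imply => /andP[zx nzx].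
  by exists z; rewrite /plt nzx.
have [y [yx lt_yx]] := exists_cover zx.
have [[|m s] //= /and3P[mm ps /eqP ly]] := IHn y (leq_trans lt_yx xn).
by exists (m :: rcons s x); rewrite /= mm rcons_path ps ly yx last_rcons eqxx.
Qed.

Lemma path_covers_last x s z : path (covers le) x s -> plt le x z -> z \notin s ->
  all (fun y => le y z || le z y) s -> plt le (last x s) z.
Proof.
elim: s x => //= y s IHs x /andP[xy ps] xz.
rewrite inE negb_or => /andP[zy zs] /andP[yz cs].
apply: IHs => //; case/orP: yz => [yz | zy']; first by rewrite /plt eq_sym zy.
have zy'' : plt le z y by rewrite /plt zy.
by move: xy => /andP[_ /forallP/(_ z)]; rewrite xz zy''.
Qed.

Lemma sat_chain_maximal s M : sat_chain_to le s M -> (forall z, le M z -> z = M) ->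
  maximal_chain le s.
Proof.
case: s => [|m s] //= /and3P[mm ps /eqP lastM] Mmax; apply/andP; split.
  by apply: sub_path ps => a b /andP[].
apply/forallP => z; rewrite orbC -implyNb; apply/implyP => /hasPn comparable.
apply/negPn/negP => zs; have := comparable m (mem_head m s); rewrite negbK.
case/orP=> [mz | zm]; last first.
  by move: mm => /forallP/(_ z); rewrite zm /= => /eqP zm'; rewrite zm' mem_head in zs.
have mz' : plt le m z by rewrite /plt mz andbT; apply: contraNneq zs => ->; exact: mem_head.
have zs' : z \notin s by apply: contra zs; rewrite inE orbC => ->.
have cs : all (fun y => le y z || le z y) s.
  by apply/allP => y ys; rewrite -[_ || _]negbK comparable // inE ys orbT.
have /andP[Mz lMz] := path_covers_last ps mz' zs' cs.
by move: Mz; rewrite lastM (Mmax z) ?eqxx // -lastM.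
Qed.

End Poset.

Section CanonicalLabeling.
Variables (T : finType) (le : rel T) (omega : T -> int) (pi : seq int).
Hypotheses (le_order : partial_order le) (omega_inj : injective omega).
Hypotheses (omega_can : canonical le omega) (pi_JH : in_JH le omega pi).

Lemma canonical_label_neq0 x : omega x != 0.
Proof.
have [s sx] := exists_sat_chain le_order x.
by case: omega_can => _ /(_ x s sx) [[_ /ltr0_neq0] | [_ /lt0r_neq0]].
Qed.

Lemma JH_perm : perm_eq pi (map omega (enum T)).
Proof. by case/andP: pi_JH. Qed.

Lemma JH_uniq : uniq pi.
Proof. by rewrite (perm_uniq JH_perm) (map_inj_uniq omega_inj) enum_uniq. Qed.

Lemma JH_size : size pi = #|T|.
Proof. by rewrite (perm_size JH_perm) size_map cardT. Qed.

Lemma JH_notin0 : 0 \notin pi.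
Proof.
apply/negP; rewrite (perm_mem JH_perm) => /mapP[t _ /esym/eqP].
by rewrite (negbTE (canonical_label_neq0 t)).
Qed.

Lemma JH_label y : y \in pi -> exists t, y = omega t.
Proof. by rewrite (perm_mem JH_perm) => /mapP[t _ ->]; exists t. Qed.

Lemma JH_index x y : plt le x y -> (index (omega x) pi < index (omega y) pi)%N.
Proof. by case/andP: pi_JH => _ /forallP/(_ x)/forallP/(_ y)/implyP. Qed.

Lemma JH_head_lt0 : pi != [::] -> head 0 pi < 0.
Proof.
case: pi JH_index (JH_label) => // a s idx lab _; have [m am] := lab a (mem_head a s).
have mm : minimal le m.
  apply/forallP => z; apply/implyP => zm; apply/negPn/negP => zm'.
  by have := idx z m; rewrite /plt zm' zm -am /= eqxx ltn0 => /(_ isT).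
have sm : sat_chain_to le [:: m] m by rewrite /= mm eqxx.
by case: omega_can => _ /(_ m _ sm) [[_ ] | [] ]; rewrite ?am // /chain_sum big_nil.
Qed.

Lemma JH_last r : sign_graded_rank le omega r -> pi != [::] ->
  (r = 0 /\ last 0 pi < 0) \/ (r = 1 /\ 0 < last 0 pi).
Proof.
move=> graded.
case/lastP: pi JH_index (JH_label) JH_uniq (JH_perm) => // s b idx lab u pe _.
have [M bM] : exists M, b = omega M by apply: lab; rewrite mem_rcons mem_head.
subst b.
have Mmax z : le M z -> z = M.
  move=> Mz; apply/eqP/negPn/negP => zM.
  have := idx M z; rewrite /plt eq_sym zM Mz => /(_ isT).
  rewrite -cats1 index_cat (negbTE (notin_cat_uniq (B := [::]) _)) ?cats1 //= eqxx addn0.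
  have : omega z \in rcons s (omega M) by rewrite (perm_mem pe) map_f ?mem_enum.
  by rewrite -index_mem size_rcons ltnS leqNgt => /negbTE ->.
have [c cM] := exists_sat_chain le_order M.
have := graded c (sat_chain_maximal cM Mmax); rewrite last_rcons.
by case: omega_can => _ /(_ M c cM) [[-> ?] | [-> ?]] <-; [left | right].
Qed.

End CanonicalLabeling.

(** * The orbit of a word *)

Lemma swap_eq_diag (p : bool * bool) b : (swap p == (b, b)) = (p == (b, b)).
Proof. by case: p b => [[] []] []. Qed.

Section Orbit.
Variables (T : finType) (omega : T -> int) (w : seq int).
Hypotheses (omega_inj : injective omega) (w_labels : perm_eq w (map omega (enum T))).
Hypothesis w0 : 0 \notin w.

Lemma uniq_labels : uniq w.
Proof. by rewrite (perm_uniq w_labels) (map_inj_uniq omega_inj) enum_uniq. Qed.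

Lemma count_labels (P : pred int) v : perm_eq v w -> count P v = #|[set t | P (omega t)]|.
Proof. by move=> vw; rewrite (permP (perm_trans vw w_labels)) count_map count_enum. Qed.

Lemma uniq_labels_of (A : {set T}) : uniq (map omega (enum A)).
Proof. by rewrite (map_inj_uniq omega_inj) enum_uniq. Qed.

Lemma psiS_foldr A : psiS omega A w = foldr psi w (map omega (enum A)).
Proof. by rewrite foldr_map. Qed.

Definition mobile_set : {set T} := [set t | mobile w (omega t)].

Lemma psiS_spec A :
  [/\ perm_eq (psiS omega A w) w, end_signs (psiS omega A w) = end_signs w &
      forall t, nbhd (psiS omega A w) (omega t) =
                if t \in A then swap (nbhd w (omega t)) else nbhd w (omega t)].
Proof.
have [pe ends nb] := foldr_psi uniq_labels w0 (uniq_labels_of A).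
rewrite psiS_foldr; split=> // t.
by rewrite nb ?(mem_map omega_inj) ?mem_enum // (perm_mem w_labels) map_f ?mem_enum.
Qed.

Lemma psiS_setI_mobile A : psiS omega A w = psiS omega (A :&: mobile_set) w.
Proof.
rewrite !psiS_foldr (foldr_psi_mobile uniq_labels w0 (uniq_labels_of _)).
rewrite [RHS](foldr_psi_mobile uniq_labels w0 (uniq_labels_of _)) !filter_map.
congr (foldr _ _ (map _ _)); rewrite /enum_mem -!filter_predI.
by apply: eq_filter => t; rewrite /= !inE; case: (mobile w (omega t)); rewrite ?andbT.
Qed.

Lemma psiS_inj : {in powerset mobile_set &, injective (psiS omega ^~ w)}.
Proof.
move=> A B; rewrite !powersetE => /subsetP AM /subsetP BM eAB; apply/setP => t.
have [_ _ nbA] := psiS_spec A; have [_ _ nbB] := psiS_spec B.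
have := nbA t; rewrite eAB nbB.
case tA: (t \in A); case tB: (t \in B) => // e; [have := AM t tA | have := BM t tB];
  by rewrite inE /mobile; move: e; case: (nbhd w (omega t)) => a b [-> _]; rewrite eqxx.
Qed.

Lemma orbit_ofE :
  perm_eq (orbit_of omega w) [seq psiS omega A w | A <- enum (powerset mobile_set)].
Proof.
apply: uniq_perm; first exact: undup_uniq.
  by rewrite (map_inj_in_uniq _) ?enum_uniq // => A B; rewrite !mem_enum; apply: psiS_inj.
move=> s; rewrite /orbit_of mem_undup; apply/mapP/mapP => [[A _ ->] | [A _ ->]].
  by exists (A :&: mobile_set); rewrite ?mem_enum ?powersetE ?subsetIr -?psiS_setI_mobile.
by exists A; rewrite ?mem_enum ?in_setT.
Qed.

Definition ddes_set : {set T} := [set t | nbhd w (omega t) == (true, false)].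

Lemma ddes_set_mobile : ddes_set \subset mobile_set.
Proof. by apply/subsetP => t; rewrite !inE /mobile => /eqP ->. Qed.

Lemma count_peaks_valleys_psiS (A : {set T}) b :
  count (fun y => nbhd (psiS omega A w) y == (b, b)) (psiS omega A w) =
  count (fun y => nbhd w y == (b, b)) w.
Proof.
have [pe _ nb] := psiS_spec A; rewrite !count_labels //; apply: eq_card => t.
by rewrite !inE nb; case: (t \in A); rewrite ?swap_eq_diag.
Qed.

Lemma count_ddes_psiS (A : {set T}) : A \subset mobile_set ->
  count (fun y => nbhd (psiS omega A w) y == (true, false)) (psiS omega A w) =
  #|symdiff ddes_set A|.
Proof.
move=> /subsetP AM; have [pe _ nb] := psiS_spec A; rewrite count_labels //.
apply: eq_card => t; rewrite !inE nb; case tA: (t \in A); last by rewrite addbF.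
by move: (AM t tA); rewrite inE /mobile; case: (nbhd w (omega t)) => [[] []].
Qed.

Lemma des_psiS_peaks (A : {set T}) : A \subset mobile_set ->
  (des (psiS omega A w) + (0 < last 0 w)%R =
   count (fun y => nbhd w y == (false, false)) w + #|symdiff ddes_set A|)%N.
Proof.
move=> AM; have [pe [_ lastA] _] := psiS_spec A.
have uA : uniq (psiS omega A w) by rewrite (perm_uniq pe) uniq_labels.
have A0 : 0 \notin psiS omega A w by rewrite (perm_mem pe).
rewrite -lastA -des_rcons0 -(count_right_below (pre := [::])) //.
rewrite -(count_peaks_valleys_psiS A) -count_ddes_psiS //.
by apply: count_split => y; case: (nbhd _ y) => [[] []].
Qed.

Lemma orbit_ofP v :
  reflect (exists2 A : {set T}, A \subset mobile_set & v = psiS omega A w)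
          (v \in orbit_of omega w).
Proof.
rewrite (perm_mem orbit_ofE); apply: (iffP mapP) => [[A] | [A]].
  by rewrite mem_enum powersetE; exists A.
by exists A; rewrite ?mem_enum ?powersetE.
Qed.

Lemma des_psiS_hat (A : {set T}) : A \subset mobile_set ->
  des (psiS omega A w) = (des (psiS omega ddes_set w) + #|symdiff ddes_set A|)%N.
Proof.
move=> AM; have := des_psiS_peaks AM; have := des_psiS_peaks ddes_set_mobile.
by rewrite symdiffxx cards0; lia.
Qed.

Lemma no_double_descent_orbit v : v \in orbit_of omega w -> no_double_descent v ->
  v = psiS omega ddes_set w.
Proof.
case/orbit_ofP => A AM ->; have [pe _ _] := psiS_spec A.
rewrite no_double_descentE ?(perm_uniq pe) ?uniq_labels ?(perm_mem pe) //.
rewrite all_predC has_count -eqn0Ngt count_ddes_psiS // cards_eq0 => /eqP/setP DA.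
congr psiS; apply/setP => t.
by have := DA t; rewrite in_set0 in_set => /negbT; rewrite negb_add => /eqP ->.
Qed.

Lemma sum_des_orbit (R : comPzSemiRingType) (x : R) :
  \sum_(v <- orbit_of omega w) x ^+ des v =
  x ^+ des (psiS omega ddes_set w) * (1 + x) ^+ #|mobile_set|.
Proof.
rewrite (perm_big _ orbit_ofE) big_map big_enum /=.
rewrite -(sum_powerset_symdiff _ ddes_set_mobile) big_distrr /=.
by apply: eq_bigr => A; rewrite powersetE => AM; rewrite des_psiS_hat // exprD.
Qed.

Lemma size_labels_orbit :
  size w = (2 * des (psiS omega ddes_set w) + (head 0 w < 0)%R + (0 < last 0 w)%R
            + #|mobile_set|)%N.
Proof.
set hat := psiS omega ddes_set w.
have [pe [headD _] _] := psiS_spec ddes_set.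
have uhat : uniq hat by rewrite (perm_uniq pe) uniq_labels.
have no_dd : count (fun y => nbhd hat y == (true, false)) hat = 0%N.
  by rewrite count_ddes_psiS ?ddes_set_mobile // symdiffxx cards0.
have := des_psiS_peaks ddes_set_mobile; rewrite symdiffxx cards0 addn0 => peaks_w.
have valleys_w :
    count (fun y => nbhd w y == (true, true)) w = ((head 0 w < 0)%R + des hat)%N.
  rewrite -(count_peaks_valleys_psiS ddes_set) -headD -des_cons0.
  rewrite -(count_left_above (pre := [::])) //.
  rewrite [RHS](count_split (b := fun y => nbhd hat y == (true, false))
                       (c := fun y => nbhd hat y == (true, true))) ?no_dd //.
  by move=> y; case: (nbhd _ y) => [[] []].
rewrite (size_pair_split (nbhd w)) -peaks_w valleys_w -/(mobile w) count_labels //.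
rewrite -/hat -/mobile_set; lia.
Qed.

Lemma peak_orbit : head 0 w < 0 -> ~~ (0 < last 0 w) ->
  {in orbit_of omega w, forall v, peak v = peak w} /\ peak w = des (psiS omega ddes_set w).
Proof.
move=> hw lw; have peak_w := count_peaks uniq_labels w0 hw lw.
have peak_psiS A : peak (psiS omega A w) = peak w.
  have [pe [hA lA] _] := psiS_spec A.
  rewrite -count_peaks ?(perm_uniq pe) ?uniq_labels ?(perm_mem pe) ?hA ?lA //.
  by rewrite count_peaks_valleys_psiS.
split=> [v /orbit_ofP[A _ ->] | ]; first exact: peak_psiS.
by have := des_psiS_peaks ddes_set_mobile; rewrite symdiffxx cards0 (negbTE lw) !addn0 peak_w.
Qed.

End Orbit.

Unset Implicit Arguments.

Theorem theorem6p3 (T : finType) (le : rel T) (omega : T -> int) (r : int)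
    (pi : seq int) :
  partial_order le ->
  injective omega ->
  (0 < #|T|)%N ->
  sign_graded_rank le omega r ->
  canonical le omega ->
  in_JH le omega pi ->
  forall pihat : seq int,
    pihat \in orbit_of omega pi ->
    no_double_descent pihat ->
    let e := (#|T|%:Z - r - 1 - 2 * (des pihat)%:Z) in
    [/\ 0 <= e,
        \sum_(sigma <- orbit_of omega pi) ('X^(des sigma) : {poly int})
          = 'X^(des pihat) * (1 + 'X) ^+ `|e|%N
      & r = 0 ->
        (forall sigma, sigma \in orbit_of omega pi -> peak sigma = peak pi)
        /\ peak pi = des pihat].
Proof.
move=> le_order omega_inj T_gt0 graded can pi_JH pihat pihat_orb pihat_ndd e.
have pe := JH_perm pi_JH; have pi0 := JH_notin0 le_order can pi_JH.
have pi_nil : pi != [::] by rewrite -size_eq0 (JH_size pi_JH) -lt0n.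
have rank_last := JH_last le_order omega_inj can pi_JH graded pi_nil.
rewrite {}/e (no_double_descent_orbit omega_inj pe pi0 pihat_orb pihat_ndd).
have head_pi := JH_head_lt0 can pi_JH pi_nil.
have := size_labels_orbit omega_inj pe pi0; rewrite (JH_size pi_JH) head_pi => size_eq.
have -> : #|T|%:Z - r - 1 - 2 * (des (psiS omega (ddes_set omega pi) pi))%:Z =
          #|mobile_set omega pi|.
  by case: rank_last => -[-> l]; rewrite size_eq ?(lt_gtF l) ?l; lia.
rewrite absz_nat sum_des_orbit //; split=> // r0.
apply: peak_orbit => //; case: rank_last => -[r1 l]; first by rewrite lt_gtF.
by move: r1; rewrite r0.
Qed.
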